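(* Let $a$ and $b$ be irrational numbers with $1<a<b$ and $\{a\}=\{b\}=:\theta$. Let $a_n=[an]$, $b_n=[bn]$, and for positive integers $n$ define $$h(n)=\frac{a_{n+1}}{a_n}-\frac{b_{n+1}}{b_n},\qquad f(n)=\begin{cases}1,& h(n)>0,\\ 0,&\text{otherwise},\end{cases}\qquad g(n)=[\theta(n+1)]-[\theta n].$$ Then $f(n)=g(n)$ for every positive integer $n$; that is, the infinite words $f(1)f(2)f(3)\cdots$ and $g(1)g(2)g(3)\cdots$ coincide.
   Context: $[x]$ is the greatest integer not exceeding $x$ and $\{x\}=x-[x]$. The sequence $g$ is the characteristic (Sturmian) sequence of slope $\theta$; equivalently $g(n)=1$ exactly when $n=[j/\theta]$ for some positive integer $j$. *)

From Stdlib Require Import Reals ZArith.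
Open Scope R_scope.

(* [x] : greatest integer not exceeding x. Int_part x = up x - 1 is the floor. *)
Definition floorR (x : R) : Z := Int_part x.

Definition fracR (x : R) : R := x - IZR (floorR x).

Definition irrational (x : R) : Prop :=
  ~ exists (p q : Z), q <> 0%Z /\ x = IZR p / IZR q.

Definition seqfl (a : R) (n : nat) : R := IZR (floorR (a * INR n)).

Definition h_fun (a b : R) (n : nat) : R :=
  seqfl a (S n) / seqfl a n - seqfl b (S n) / seqfl b n.

Definition f_fun (a b : R) (n : nat) : Z :=
  if Rlt_dec 0 (h_fun a b n) then 1%Z else 0%Z.

Definition g_fun (theta : R) (n : nat) : Z :=
  (floorR (theta * INR (S n)) - floorR (theta * INR n))%Z.

From Stdlib Require Import Reals ZArith Lra Lia.
Open Scope R_scope.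

(* Write a = A + θ and b = B + θ with integers 1 <= A < B. Then
   a_n = A n + t and b_n = B n + t with t = [θ n], while a_(n+1) and b_(n+1)
   add A + g(n) and B + g(n), so that a_(n+1) b_n - b_(n+1) a_n = (B - A)(g(n) n - t).
   Since g(n) is 0 or 1 and 0 <= t < n, this is positive exactly when g(n) = 1. *)

Lemma floorR_spec (x : R) : IZR (floorR x) <= x < IZR (floorR x) + 1.
Proof.
  unfold floorR, Int_part. destruct (archimed x) as [Hup Hup1].
  rewrite minus_IZR. simpl. lra.
Qed.

Lemma floorR_unique (x : R) (z : Z) : IZR z <= x < IZR z + 1 -> floorR x = z.
Proof.
  intros [Hzx Hxz]. unfold floorR, Int_part.
  assert (Hup : up x = (z + 1)%Z).
  { symmetry. apply tech_up; rewrite plus_IZR; simpl; lra. }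
  rewrite Hup. ring.
Qed.

Lemma floorR_addz (k : Z) (x : R) : floorR (IZR k + x) = (k + floorR x)%Z.
Proof.
  apply floorR_unique. rewrite plus_IZR. pose proof (floorR_spec x). lra.
Qed.

Lemma floorR_add_frac (x th : R) : 0 <= th < 1 ->
  floorR (x + th) = floorR x \/ floorR (x + th) = (floorR x + 1)%Z.
Proof.
  intros Hth.
  pose proof (floorR_spec x). pose proof (floorR_spec (x + th)).
  assert (Hlo : (-1 < floorR (x + th) - floorR x)%Z)
    by (apply lt_IZR; rewrite minus_IZR; simpl; lra).
  assert (Hhi : (floorR (x + th) - floorR x < 2)%Z)
    by (apply lt_IZR; rewrite minus_IZR; simpl; lra).
  lia.
Qed.

Lemma g_fun_cases (th : R) (n : nat) : 0 <= th < 1 ->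
  g_fun th n = 0%Z \/ g_fun th n = 1%Z.
Proof.
  intros Hth. unfold g_fun.
  replace (th * INR (S n)) with (th * INR n + th) by (rewrite S_INR; ring).
  destruct (floorR_add_frac (th * INR n) th Hth) as [-> | ->]; lia.
Qed.

Lemma floorR_frac_mul_bounds (th x : R) : 0 <= th < 1 -> 0 < x ->
  0 <= IZR (floorR (th * x)) < x.
Proof.
  intros Hth Hx. pose proof (floorR_spec (th * x)) as Ft.
  split; [| nra].
  apply IZR_le. assert (Hneg : (-1 < floorR (th * x))%Z)
    by (apply lt_IZR; simpl; nra).
  lia.
Qed.

Lemma seqfl_int_add (C : Z) (th : R) (m : nat) :
  seqfl (IZR C + th) m = IZR C * INR m + IZR (floorR (th * INR m)).
Proof.
  unfold seqfl.
  replace ((IZR C + th) * INR m) with (IZR (C * Z.of_nat m) + th * INR m)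
    by (rewrite mult_IZR, <- INR_IZR_INZ; ring).
  rewrite floorR_addz, plus_IZR, mult_IZR, <- INR_IZR_INZ. reflexivity.
Qed.

Section SameFractionalPart.

Variables (A B : Z) (th : R) (n : nat).
Hypothesis Hth : 0 <= th < 1.
Hypothesis HA : 1 <= IZR A.
Hypothesis HAB : IZR A < IZR B.
Hypothesis Hn : (1 <= n)%nat.

Let t := IZR (floorR (th * INR n)).

Lemma h_fun_int_add :
  h_fun (IZR A + th) (IZR B + th) n =
  (IZR B - IZR A) * (IZR (g_fun th n) * INR n - t) /
  ((IZR A * INR n + t) * (IZR B * INR n + t)).
Proof.
  assert (HN : 1 <= INR n) by (apply (le_INR 1); exact Hn).
  assert (Ht : 0 <= t) by (apply floorR_frac_mul_bounds; lra).
  assert (Hg : IZR (floorR (th * INR (S n))) = t + IZR (g_fun th n))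
    by (unfold g_fun, t; rewrite minus_IZR; ring).
  unfold h_fun. rewrite !seqfl_int_add, Hg, S_INR. fold t.
  field. split; nra.
Qed.

Lemma h_fun_pos_iff : 0 < h_fun (IZR A + th) (IZR B + th) n <-> g_fun th n = 1%Z.
Proof.
  assert (HN : 0 < INR n) by (apply lt_0_INR; lia).
  assert (Ht : 0 <= t < INR n) by (apply floorR_frac_mul_bounds; lra).
  rewrite h_fun_int_add.
  set (D := (IZR A * INR n + t) * (IZR B * INR n + t)).
  assert (HD : 0 < / D) by (apply Rinv_0_lt_compat, Rmult_lt_0_compat; nra).
  unfold Rdiv.
  destruct (g_fun_cases th n Hth) as [Hg | Hg]; rewrite Hg; split; intros H.
  - exfalso.
    assert (Hnum : (IZR B - IZR A) * (IZR 0 * INR n - t) <= 0) by (simpl; nra).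
    nra.
  - discriminate.
  - reflexivity.
  - apply Rmult_lt_0_compat; [nra | exact HD].
Qed.

End SameFractionalPart.

Theorem theorem5 (a b : R) :
  irrational a -> irrational b -> 1 < a -> a < b -> fracR a = fracR b ->
  forall n : nat, (1 <= n)%nat -> f_fun a b n = g_fun (fracR a) n.
Proof.
  intros _ _ Ha1 Hab Hfr n Hn.
  assert (Ea : a = IZR (floorR a) + fracR a) by (unfold fracR; ring).
  assert (Eb : b = IZR (floorR b) + fracR a) by (rewrite Hfr; unfold fracR; ring).
  pose proof (floorR_spec a) as Fa. pose proof (floorR_spec b) as Fb.
  assert (Hth : 0 <= fracR a < 1) by (unfold fracR; lra).
  assert (HA : 1 <= IZR (floorR a)).
  { apply IZR_le. assert (Hpos : (0 < floorR a)%Z) by (apply lt_IZR; lra). lia. }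
  assert (HAB : IZR (floorR a) < IZR (floorR b)) by lra.
  pose proof (h_fun_pos_iff _ _ _ _ Hth HA HAB Hn) as Hpos.
  rewrite <- Ea, <- Eb in Hpos.
  unfold f_fun. destruct (Rlt_dec 0 (h_fun a b n)) as [H | H].
  - symmetry. apply Hpos, H.
  - destruct (g_fun_cases (fracR a) n Hth) as [Hg | Hg]; [now rewrite Hg |].
    exfalso. apply H, Hpos, Hg.
Qed.
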